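(* For every integer $n \geq 1$, $$\sum_{\pi \vdash n} t(\pi) = \sum_{i \geq 1} S(i)\, p(n-i).$$
   Context: $p(m)$ is the number of partitions of $m$, with $p(0)=1$ and $p(m)=0$ for $m<0$. For a partition $\pi$, $f_i$ denotes the number of times $i$ appears as a part of $\pi$, and $t(\pi)$ is the nonnegative integer such that $f_i$ is odd for all $1 \leq i \leq t(\pi)$ and $f_{t(\pi)+1}$ is even (possibly zero). The rank of a partition is its largest part minus its number of parts. For $i \geq 1$, $S(i)$ is the number of partitions of $i$ into distinct parts with even rank minus the number of partitions of $i$ into distinct parts with odd rank. *)

From mathcomp Require Import all_boot all_order all_algebra.
Set Implicit Arguments. Unset Strict Implicit. Unset Printing Implicit Defensive.
Import GRing.Theory Num.Theory.

(* A partition of n is encoded by its frequency function: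
   f : {ffun 'I_n -> 'I_n.+1}, where f i is the multiplicity f_{i+1} of the
   part i+1 (parts of a partition of n lie in 1..n, and each multiplicity
   is at most n).  f encodes a partition of n iff sum_k k * f_k = n. *)
Definition fpart (n : nat) := {ffun 'I_n -> 'I_n.+1}.

Definition is_part (n : nat) (f : fpart n) : bool :=
  \sum_(i < n) i.+1 * f i == n.

Definition mult (n : nat) (f : fpart n) (k : nat) : nat :=
  match insub k.-1 with
  | Some i => if k is 0 then 0 else nat_of_ord (f i)
  | None => 0
  end.

Definition npart (m : nat) : nat := #|[pred f : fpart m | is_part f]|.

(* t(pi): the least j with f_{j+1} even, i.e. f_1,...,f_j all odd. Since
   f_{n+1} = 0, the search in 0..n always succeeds. *)
Definition tpart (n : nat) (f : fpart n) : nat :=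
  find (fun j => ~~ odd (mult f j.+1)) (iota 0 n.+1).

Definition num_parts (n : nat) (f : fpart n) : nat := \sum_(i < n) (f i : nat).

Definition largest_part (n : nat) (f : fpart n) : nat :=
  \max_(i < n | (f i : nat) != 0) i.+1.

Definition rank (n : nat) (f : fpart n) : int :=
  (largest_part f)%:Z - (num_parts f)%:Z.

Definition distinct_parts (n : nat) (f : fpart n) : bool :=
  [forall i, (f i : nat) <= 1].

Definition Sdist (i : nat) : int :=
  (#|[pred f : fpart i | is_part f && distinct_parts f && ~~ odd `|rank f|%N]|)%:Z
  - (#|[pred f : fpart i | is_part f && distinct_parts f && odd `|rank f|%N]|)%:Z.

From mathcomp Require Import all_boot all_order all_algebra ring.
Import GRing.Theory Num.Theory.
Set Implicit Arguments. Unset Strict Implicit. Unset Printing Implicit Defensive.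
Local Open Scope ring_scope.

(* t(pi) counts the j >= 1 such that f_1, ..., f_j are all odd, and an odd
   multiplicity of k has generating function q^k / (1 - q^2k), so
     sum_n (sum_(pi |- n) t(pi)) q^n
       = P(q) * sum_(j >= 1) prod_(k <= j) q^k / (1 + q^k)
   with P(q) = prod_k 1 / (1 - q^k). Sorting the distinct partitions by their
   largest part L + 1 gives
     sum_i S(i) q^i = sum_(L >= 0) (-1)^L q^(L+1) (q; q)_L.
   The two inner series are equal: expand (q; q)_L in the elementary symmetric
   functions e_j(q, ..., q^L) and regroup the terms by j; the j-th group G_j
   satisfies (1 + q^j) G_j = q^j G_(j-1), the recursion defining
   prod_(k <= j) q^k / (1 + q^k). All series are handled as polynomials
   compared up to degree n. *)

Section Truncation.
Context {R : comNzRingType}.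
Implicit Types (p q r : {poly R}).

Definition eqt (N : nat) p q : bool := [forall i : 'I_N.+1, p`_i == q`_i].

Lemma eqtP N p q : reflect (forall i, (i <= N)%N -> p`_i = q`_i) (eqt N p q).
Proof.
apply: (iffP forallP) => [h i le_iN | h i]; last by rewrite h // -ltnS.
by have /eqP := h (Ordinal (le_iN : (i < N.+1)%N)).
Qed.

Lemma eqt_coef N p q i : (i <= N)%N -> eqt N p q -> p`_i = q`_i.
Proof. by move=> le_iN /eqtP; apply. Qed.

Lemma eqt_refl N p : eqt N p p. Proof. exact/eqtP. Qed.

Lemma eqt_sym N p q : eqt N p q -> eqt N q p.
Proof. by move=> /eqtP h; apply/eqtP => i /h. Qed.

Lemma eqt_trans N p q r : eqt N p q -> eqt N q r -> eqt N p r.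
Proof. by move=> /eqtP h1 /eqtP h2; apply/eqtP => i hi; rewrite h1 ?h2. Qed.

Lemma eqt_le M N p q : (M <= N)%N -> eqt N p q -> eqt M p q.
Proof.
by move=> le_MN /eqtP h; apply/eqtP => i le_iM; rewrite h // (leq_trans le_iM).
Qed.

Lemma eqtD N p q p' q' : eqt N p q -> eqt N p' q' -> eqt N (p + p') (q + q').
Proof. by move=> /eqtP h1 /eqtP h2; apply/eqtP => i hi; rewrite !coefD h1 ?h2. Qed.

Lemma eqtM N p q p' q' : eqt N p q -> eqt N p' q' -> eqt N (p * p') (q * q').
Proof.
move=> /eqtP h1 /eqtP h2; apply/eqtP => i hi; rewrite !coefM; apply: eq_bigr => j _.
by rewrite h1 ?h2 // (leq_trans _ hi) ?leq_subr ?leq_ord.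
Qed.

Lemma eqt_mulXn2l N d p q : eqt N p q -> eqt (N + d) ('X^d * p) ('X^d * q).
Proof.
move=> /eqtP h; apply/eqtP => i le_i; rewrite !coefXnM; case: ltnP => // le_di.
by rewrite h // leq_subLR addnC.
Qed.

Lemma eqt_sum N (I : finType) (P : pred I) (F G : I -> {poly R}) :
  (forall i, P i -> eqt N (F i) (G i)) ->
  eqt N (\sum_(i | P i) F i) (\sum_(i | P i) G i).
Proof.
move=> h; elim/big_rec2: _ => [|i p q Pi]; first exact: eqt_refl.
exact: eqtD (h i Pi).
Qed.

Lemma eqt_prod N (I : finType) (P : pred I) (F G : I -> {poly R}) :
  (forall i, P i -> eqt N (F i) (G i)) ->
  eqt N (\prod_(i | P i) F i) (\prod_(i | P i) G i).
Proof.
move=> h; elim/big_rec2: _ => [|i p q Pi]; first exact: eqt_refl.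
exact: eqtM (h i Pi).
Qed.

Lemma eqt_sub0 N p q : eqt N (p - q) 0 = eqt N p q.
Proof.
apply/eqtP/eqtP => h i /h; rewrite coefB coef0; last by move->; rewrite subrr.
by move/eqP; rewrite subr_eq0 => /eqP.
Qed.

Lemma eqt_mulXn0 N d p : (N < d)%N -> eqt N ('X^d * p) 0.
Proof.
move=> lt_Nd; apply/eqtP => i le_iN.
by rewrite coefXnM coef0 (leq_ltn_trans le_iN lt_Nd).
Qed.

Lemma eqt_1DXn_cancel N d p q : (0 < d)%N ->
  eqt N ((1 + 'X^d) * p) ((1 + 'X^d) * q) -> eqt N p q.
Proof.
rewrite -eqt_sub0 -mulrBr -(eqt_sub0 N p) => d_gt0; move: (p - q) => u /eqtP h.
apply/eqtP; elim/ltn_ind=> i IH le_iN; have := h i le_iN.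
rewrite mulrDl mul1r coefD coefXnM !coef0; case: ltnP => [_|le_di].
  by rewrite addr0.
have lt_idi : (i - d < i)%N by rewrite ltn_subrL d_gt0 (leq_trans d_gt0 le_di).
by rewrite (IH (i - d)%N) ?coef0 ?addr0 // (leq_trans (leq_subr d i) le_iN).
Qed.

End Truncation.

Lemma geom_alt (S : comPzRingType) (y : S) N :
  (1 + y) * \sum_(a < N) (-1) ^+ a * y ^+ a.+1 = y - (-1) ^+ N * y ^+ N.+1.
Proof.
elim: N => [|N IH]; first by rewrite big_ord0 mulr0 expr0 mul1r expr1 subrr.
by rewrite big_ord_recr /= mulrDr IH !exprS; ring.
Qed.

Lemma geom_odd (S : comPzRingType) (y : S) N :
  (1 + y) * \sum_(m < N.+1) (odd m)%:R * y ^+ m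
  = y * \sum_(m < N.+1) y ^+ m - (~~ odd N)%:R * y ^+ N.+1.
Proof.
elim: N => [|N IH]; first by rewrite !big_ord_recr !big_ord0 /=; ring.
rewrite big_ord_recr [in RHS]big_ord_recr /= mulrDr IH.
by case: (odd N); rewrite /= !exprS; ring.
Qed.

Section QSeriesIdentity.
Context {R : comNzRingType}.

(* [qelem n m] is the elementary symmetric function e_m(q, q^2, ..., q^n). *)
Fixpoint qelem (n m : nat) : {poly R} :=
  match n, m with
  | _, 0 => 1
  | 0, _.+1 => 0
  | n1.+1, m1.+1 => qelem n1 m1.+1 + 'X^(n1.+1) * qelem n1 m1
  end.

Lemma qelem_n0 n : qelem n 0 = 1. Proof. by case: n. Qed.

Lemma qelemSS n m : qelem n.+1 m.+1 = qelem n m.+1 + 'X^(n.+1) * qelem n m.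
Proof. by []. Qed.

(* e_{m+1}(q, ..., q^{n+1}) = q^{m+1} e_{m+1}(1, q, ..., q^n) *)
Lemma qelemSS_scaled n m : qelem n.+1 m.+1 = 'X^(m.+1) * (qelem n m.+1 + qelem n m).
Proof.
elim: n m => [|n IH] m; first by case: m => [|m] /=; ring.
rewrite qelemSS {1}IH qelemSS; case: m => [|m]; first by rewrite !qelem_n0 !exprS; ring.
by rewrite {1}IH qelemSS !exprS; ring.
Qed.

Lemma qelem_alt_sum L B : (L < B)%N ->
  \sum_(j < B) (-1) ^+ j * qelem L j = \prod_(k < L) (1 - 'X^(k.+1)).
Proof.
elim: L B => [|L IH] [|B] // lt_LB.
  by rewrite big_ord_recl big1 ?big_ord0 ?expr0 ?mul1r ?addr0 // => j _; rewrite mulr0.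
pose P := \prod_(k < L) (1 - 'X^(k.+1)) : {poly R}.
pose odd_sum := \sum_(j < B) (-1) ^+ j * qelem L j.+1.
have shift_sum : 1 - odd_sum = P.
  rewrite /P -(IH B.+1) ?(ltnW lt_LB) // big_ord_recl qelem_n0 expr0 mul1r.
  by rewrite -sumrN; congr (_ + _); apply: eq_bigr => j _; rewrite lift0 exprS; ring.
rewrite [RHS]big_ord_recr [LHS]big_ord_recl qelem_n0 expr0 mul1r -/P.
rewrite (eq_bigr (fun j : 'I_B => - ((-1) ^+ j * qelem L j.+1)
                   - 'X^(L.+1) * ((-1) ^+ j * qelem L j))); last first.
  by move=> j _; rewrite lift0 qelemSS exprS; ring.
by rewrite sumrB sumrN -mulr_sumr IH // -/odd_sum -/P -shift_sum /=; ring.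
Qed.

Definition sdist_gf (L : nat) : {poly R} :=
  (-1) ^+ L * 'X^(L.+1) * \prod_(k < L) (1 - 'X^(k.+1)).

Definition sdist_series (N : nat) : {poly R} := \sum_(L < N) sdist_gf L.

(* Expanding each [sdist_gf L] with [qelem_alt_sum], [sdist_slice M j.+1] collects
   the terms coming from e_j. *)
Definition sdist_slice (M j : nat) : {poly R} :=
  if j is j1.+1 then \sum_(L < M) (-1) ^+ (L + j1) * 'X^(L.+1) * qelem L j1 else 1.

Lemma sum_sdist_slice M : \sum_(j < M) sdist_slice M j.+1 = sdist_series M.
Proof.
rewrite /sdist_slice /sdist_series exchange_big /=; apply/eq_bigr => L _.
rewrite /sdist_gf -(qelem_alt_sum (ltn_ord L)) !mulr_sumr; apply: eq_bigr => j _.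
by rewrite exprD; ring.
Qed.

Lemma sdist_sliceSS M j :
  sdist_slice M.+1 j.+1 = 'X^(j.+1) * (sdist_slice M j - sdist_slice M j.+1).
Proof.
rewrite /sdist_slice big_ord_recl mulrBr mulr_sumr -sumrN; case: j => [|j].
  rewrite addn0 expr0 mul1r qelem_n0 expr1 !mulr1; congr (_ + _).
  by apply: eq_bigr => L _; rewrite lift0 !qelem_n0 !addn0 !exprS; ring.
have -> : qelem 0 j.+1 = 0 by [].
rewrite mulr0 add0r mulr_sumr -big_split; apply: eq_bigr => L _.
by rewrite lift0 qelemSS_scaled !addSn !addnS !exprS /=; ring.
Qed.

Lemma sdist_slice_trunc M j : eqt M (sdist_slice M.+1 j) (sdist_slice M j).
Proof.
case: j => [|j]; first exact: eqt_refl.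
rewrite /sdist_slice big_ord_recr /= -[X in eqt _ _ X]addr0.
by apply: eqtD; [exact: eqt_refl | rewrite -mulrA mulrCA; exact: eqt_mulXn0].
Qed.

Lemma sdist_slice_step N j :
  eqt N ((1 + 'X^(j.+1)) * sdist_slice N j.+1) ('X^(j.+1) * sdist_slice N j).
Proof.
case: N => [|M].
  rewrite /sdist_slice big_ord0 mulr0; apply: eqt_sym; exact: eqt_mulXn0.
have trunc k : eqt M.+1 ('X^(j.+1) * sdist_slice M.+1 k) ('X^(j.+1) * sdist_slice M k).
  apply: (eqt_le _ (eqt_mulXn2l j.+1 (sdist_slice_trunc M k))).
  by rewrite addnS ltnS leq_addr.
rewrite mulrDl mul1r [X in X + _]sdist_sliceSS.
apply: eqt_trans (eqtD (eqt_refl _ _) (trunc _)) _.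
by rewrite -mulrDr subrK; apply: eqt_sym.
Qed.

(* [qfrac N k] is q^(k+1) / (1 + q^(k+1)) truncated at degree N. *)
Definition qfrac (N k : nat) : {poly R} :=
  \sum_(a < N) (-1) ^+ a * 'X^(k.+1 * a.+1).

Lemma qfrac_step N k : eqt N ((1 + 'X^(k.+1)) * qfrac N k) 'X^(k.+1).
Proof.
rewrite /qfrac; under eq_bigr do rewrite exprM.
rewrite geom_alt -exprM -[X in eqt _ _ X]subr0.
apply: eqtD (eqt_refl _ _) _; rewrite -mulNr mulrC oppr0.
by apply: eqt_mulXn0; rewrite mulSn ltnS leq_addr.
Qed.

Lemma sdist_slice_qfrac N j : eqt N (sdist_slice N j) (\prod_(k < j) qfrac N k).
Proof.
elim: j => [|j IH]; first by rewrite big_ord0; apply: eqt_refl.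
apply: (@eqt_1DXn_cancel _ N j.+1) => //.
apply: eqt_trans (sdist_slice_step N j) _.
rewrite big_ord_recr /= mulrCA.
apply: eqt_trans (eqtM (eqt_refl _ _) IH) _.
by rewrite mulrC; apply: eqtM (eqt_refl _ _) (eqt_sym (qfrac_step N j)).
Qed.

Lemma sum_prod_qfrac N :
  eqt N (\sum_(j < N) \prod_(k < j.+1) qfrac N k) (sdist_series N).
Proof.
rewrite -sum_sdist_slice; apply: eqt_sum => j _.
exact: eqt_sym (sdist_slice_qfrac N j.+1).
Qed.

Lemma coef_sdist_gf L j : (j <= L)%N -> (sdist_gf L)`_j = 0.
Proof. by move=> le_jL; rewrite /sdist_gf -mulrA mulrCA coefXnM ltnS le_jL. Qed.

Lemma coef_sdist_series N M i : (i <= M)%N -> (M <= N)%N ->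
  (sdist_series N)`_i = (sdist_series M)`_i.
Proof.
move=> le_iM le_MN.
rewrite !coef_sum (big_ord_widen _ (fun L => (sdist_gf L)`_i) le_MN).
rewrite [RHS]big_mkcond; apply: eq_bigr => L _; case: ltnP => // le_ML.
by rewrite coef_sdist_gf // (leq_trans le_iM).
Qed.

Lemma coef0_sdist_series N : (sdist_series N)`_0 = 0.
Proof. by rewrite coef_sum big1 // => L _; rewrite coef_sdist_gf. Qed.

End QSeriesIdentity.

Section PartitionSeries.
Context {R : comNzRingType}.

Definition qgeom (N k : nat) : {poly R} := \sum_(a < N.+1) 'X^(k.+1 * a).

Definition part_gf (N : nat) : {poly R} := \prod_(k < N) qgeom N k.

Lemma coef_qgeom N k i : (i <= N)%N -> (qgeom N k)`_i = (k.+1 %| i)%:R.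
Proof.
move=> le_iN; rewrite /qgeom coef_sum; under eq_bigr do rewrite coefXn.
case: dvdnP le_iN => [[a ->] le_iN | ndvd _]; last first.
  by apply: big1 => b _; case: eqP => // eq_i; case: ndvd; exists b; rewrite eq_i mulnC.
rewrite (eq_bigr (fun b : 'I_N.+1 => if b == a :> nat then 1 else 0)); last first.
  by move=> b _; rewrite [(a * _)%N]mulnC eqn_pmul2l // eq_sym; case: eqP.
by rewrite -big_mkcond (big_ord1_eq _ (fun _ => 1)) ltnS (leq_trans _ le_iN) ?leq_pmulr.
Qed.

Lemma eqt_qgeom M N k : (M <= N)%N ->
  eqt M (qgeom N k) (if (k < M)%N then qgeom M k else 1).
Proof.
move=> le_MN; apply/eqtP => i le_iM; rewrite coef_qgeom ?(leq_trans le_iM) //.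
case: ltnP => [_ | le_Mk]; first by rewrite coef_qgeom.
rewrite coefC; case: i le_iM => [|i] le_iM; first by rewrite dvdn0.
suff /negbTE -> : ~~ (k.+1 %| i.+1)%N by [].
apply: contraTN le_Mk => /(dvdn_leq (ltn0Sn _)) le_ki.
by rewrite -ltnNge (leq_trans le_ki le_iM).
Qed.

Lemma odd_gf n k :
  eqt n (\sum_(m < n.+1) (odd m)%:R%:P * 'X^(k.+1 * m)) (qfrac n k * qgeom n k).
Proof.
have qgeomE : qgeom n k = \sum_(m < n.+1) 'X^(k.+1) ^+ m.
  by apply: eq_bigr => m _; rewrite exprM.
apply: (@eqt_1DXn_cancel _ n k.+1) => //.
under eq_bigr do rewrite exprM rmorph_nat.
rewrite geom_odd -qgeomE mulrA -[X in eqt _ _ X]subr0.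
apply: eqtD; first exact: eqtM (eqt_sym (qfrac_step n k)) (eqt_refl _ _).
rewrite -exprM oppr0 -mulNr mulrC; apply: eqt_mulXn0.
by rewrite mulSn ltnS leq_addr.
Qed.

Lemma odd_prefix_gf (n j k : nat) :
  eqt n (\sum_(m < n.+1) ((k <= j)%N ==> odd m)%:R%:P * 'X^(k.+1 * m))
        ((if (k <= j)%N then qfrac n k else 1) * qgeom n k).
Proof.
case: leqP => _ /=; first exact: odd_gf.
by rewrite mul1r; under eq_bigr do rewrite polyC1 mul1r; exact: eqt_refl.
Qed.

End PartitionSeries.

Lemma sum_parts_prod (R : comNzRingType) n (w : nat -> nat -> R) :
  \sum_(f : fpart n | is_part f) \prod_(k < n) w k (f k)
  = (\prod_(k < n) \sum_(m < n.+1) (w k m)%:P * 'X^(k.+1 * m))`_n.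
Proof.
rewrite (bigA_distr_bigA (fun (k : 'I_n) (m : 'I_n.+1) => (w k m)%:P * 'X^(k.+1 * m))).
rewrite coef_sum big_mkcond /=; apply: eq_bigr => f _.
rewrite big_split /= -rmorph_prod prodrXr coefCM coefXn.
by rewrite /is_part eq_sym; case: eqP => _; rewrite ?mulr1 ?mulr0.
Qed.

Lemma npart_coef m N : (m <= N)%N -> (npart m)%:Z = (part_gf N)`_m.
Proof.
move=> le_mN.
have /(eqt_coef (leqnn m)) -> : eqt m (part_gf N) (part_gf m : {poly int}).
  rewrite /part_gf (big_ord_widen _ (qgeom m) le_mN) [X in eqt _ _ X]big_mkcond.
  by apply: eqt_prod => k _; apply: eqt_qgeom.
rewrite /npart -sum1_card -natz natr_sum.
transitivity (\sum_(f : fpart m | is_part f) \prod_(k < m) (1 : int)).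
  by apply: eq_big => [f | f _]; rewrite ?inE ?big1.
rewrite (sum_parts_prod m (fun _ _ => 1 : int)).
by under eq_bigr do under eq_bigr do rewrite polyC1 mul1r.
Qed.

Lemma find_iotaS (p : pred nat) m :
  find p (iota 0 m.+1) = (find p (iota 0 m) + all (predC p) (iota 0 m.+1))%N.
Proof.
have -> : iota 0 m.+1 = iota 0 m ++ [:: m] by rewrite -addn1 iotaD.
rewrite find_cat all_cat all_predC /= andbT.
case: ifP => [_ | /negbT hasNp]; first by rewrite addn0.
by rewrite (hasNfind hasNp) size_iota; case: (p m).
Qed.

Lemma find_iota (p : pred nat) m :
  find p (iota 0 m) = (\sum_(j < m) all (predC p) (iota 0 j.+1))%N.
Proof. by elim: m => [|m IH]; rewrite ?big_ord0 // big_ord_recr find_iotaS IH. Qed.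

Lemma mult_ord n (f : fpart n) (k : 'I_n) : mult f k.+1 = f k.
Proof. by rewrite /mult /= valK. Qed.

Lemma mult_out n (f : fpart n) : mult f n.+1 = 0%N.
Proof. by rewrite /mult /= insubF // ltnn. Qed.

Lemma tpart_sum n (f : fpart n) :
  tpart f = (\sum_(j < n) [forall k : 'I_n, (k <= j) ==> odd (f k)])%N.
Proof.
rewrite /tpart find_iotaS find_iota all_predC.
have -> : has (fun j => ~~ odd (mult f j.+1)) (iota 0 n.+1).
  by apply/hasP; exists n; rewrite ?mult_out // mem_iota ltnSn.
rewrite addn0; apply: eq_bigr => j _; congr nat_of_bool.
apply/allP/forallP => [h k | h x].
  apply/implyP => le_kj; have := h k; rewrite mem_iota ltnS le_kj /= mult_ord.
  by rewrite negbK; apply.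
rewrite mem_iota ltnS /= => le_xj; have lt_xn := leq_ltn_trans le_xj (ltn_ord j).
by have := h (Ordinal lt_xn); rewrite /= le_xj negbK (mult_ord f (Ordinal lt_xn)).
Qed.

Lemma prodr_bool (S : comPzSemiRingType) (I : finType) (b : pred I) :
  \prod_(i : I) (b i)%:R = [forall i, b i]%:R :> S.
Proof.
have [/forallP b_all | /forallPn [i /negbTE bi]] := boolP [forall i, b i].
  by rewrite big1 // => i _; rewrite b_all.
by rewrite (bigD1 i) //= bi mul0r.
Qed.

Lemma sum_tpart_coef n :
  ((\sum_(f : fpart n | is_part f) tpart f)%N)%:Z = (sdist_series n * part_gf n)`_n.
Proof.
pose w (j k m : nat) : int := ((k <= j)%N ==> odd m)%:R.
transitivity (\sum_(j < n) \sum_(f : fpart n | is_part f) \prod_(k < n) w j k (f k)).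
  rewrite exchange_big -natz natr_sum; apply: eq_bigr => f _.
  by rewrite tpart_sum natr_sum; apply: eq_bigr => j _; rewrite prodr_bool.
under eq_bigr do rewrite sum_parts_prod.
rewrite -coef_sum; apply: (eqt_coef (leqnn n)).
apply: (eqt_trans _ (eqtM (sum_prod_qfrac n) (eqt_refl _ (part_gf n)))).
rewrite mulr_suml; apply: eqt_sum => j _.
have -> : \prod_(k < j.+1) qfrac n k
        = \prod_(k < n) (if (k <= j)%N then qfrac n k else 1) :> {poly int}.
  rewrite (big_ord_widen _ (qfrac n) (ltn_ord j)) big_mkcond.
  by apply: eq_bigr => k _; rewrite ltnS.
by rewrite /part_gf -big_split /=; apply: eqt_prod => k _; exact: odd_prefix_gf.
Qed.

Lemma odd_distn (a b : nat) : odd `|a%:Z - b%:Z|%N = odd (a + b).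
Proof.
case: (leqP a b) => [le_ab | /ltnW le_ba].
  by rewrite distnEr // oddB // oddD addbC.
by rewrite distnEl // oddB // oddD.
Qed.

Lemma largest_part_ge n (f : fpart n) (k : 'I_n) :
  (f k != 0 :> nat) -> (k.+1 <= largest_part f)%N.
Proof. exact: (@leq_bigmax_cond _ (fun i : 'I_n => f i != 0 :> nat)). Qed.

Lemma largest_partP n (f : fpart n) : (0 < largest_part f)%N ->
  exists2 k : 'I_n, (f k != 0 :> nat) & largest_part f = k.+1.
Proof.
rewrite /largest_part; case: (pickP (fun k => f k != 0 :> nat)) => [k0 fk0 _ | none].
  have A_gt0 : (0 < #|[pred k | f k != 0 :> nat]|)%N by apply/card_gt0P; exists k0.
  have [k fk lpE] := eq_bigmax_cond (fun k : 'I_n => k.+1) A_gt0.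
  by exists k; rewrite // -lpE; apply: eq_bigl => i; rewrite inE.
by rewrite big_pred0.
Qed.

Lemma largest_part_gt0 n (f : fpart n) :
  (0 < n)%N -> is_part f -> (0 < largest_part f)%N.
Proof.
move=> n_gt0; apply: contraTT; rewrite -leqNgt leqn0 /is_part => /eqP lp0.
rewrite big1 => [|k _]; first by rewrite eq_sym -lt0n.
have /eqP -> : f k == 0 :> nat by apply: contraTT isT => /largest_part_ge; rewrite lp0.
by rewrite muln0.
Qed.

(* Weight of multiplicity [m] of the part [k+1] in a distinct partition with
   largest part [L+1], up to the global sign (-1)^(L+1). *)
Definition sdist_weight (L k m : nat) : int :=
  match m with 0 => (k != L)%:R | 1 => - (k <= L)%:R | _ => 0 end.

Lemma prod_sdist_weight n (f : fpart n) (L : 'I_n) :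
  \prod_(k < n) sdist_weight L k (f k)
  = if distinct_parts f && (largest_part f == L.+1) then (-1) ^+ num_parts f else 0.
Proof.
have [dist_f | /forallPn [k]] := boolP (distinct_parts f); last first.
  rewrite -ltnNge => lt1_fk; apply/eqP/prodf_eq0; exists k => //.
  by case: (nat_of_ord (f k)) lt1_fk => [|[|m]].
have weightE (k : 'I_n) : sdist_weight L k (f k)
    = if f k == 0 :> nat then (k != L)%:R else - (k <= L)%:R.
  by have := forallP dist_f k; case: (nat_of_ord (f k)) => [|[|m]].
rewrite /=; case: eqP => [lp_L | lp_neqL].
  have [k0 fL lp_k0] : exists2 k0 : 'I_n, (f k0 != 0 :> nat) & largest_part f = k0.+1.
    by apply: largest_partP; rewrite lp_L.
  have eq_k0L : k0 = L by apply: val_inj; apply: succn_inj; rewrite -lp_k0.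
  subst k0; rewrite /num_parts -prodrXr; apply: eq_bigr => k _; rewrite weightE.
  have [fk0 | fk_neq0] := eqVneq (f k : nat) 0%N.
    rewrite fk0 expr0; have [eq_kL | //] := eqVneq k L.
    by move: fL; rewrite -eq_kL fk0.
  have -> : (f k : nat) = 1%N.
    by case: (nat_of_ord (f k)) fk_neq0 (forallP dist_f k) => [|[|m]].
  by rewrite -ltnS -lp_L largest_part_ge.
apply/eqP/prodf_eq0; have [fL0 | fL_neq0] := eqVneq (f L : nat) 0%N.
  by exists L => //; rewrite weightE fL0 eqxx.
have lp_gtL : (L.+1 < largest_part f)%N.
  by rewrite ltn_neqAle eq_sym largest_part_ge // andbT; apply/eqP.
have [k fk lp_k] := largest_partP (ltn_trans (ltn0Sn _) lp_gtL).
by exists k => //; rewrite weightE (negbTE fk) -ltnS -lp_k leqNgt lp_gtL.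
Qed.

Lemma sum_sdist_weight n (f : fpart n) : (0 < n)%N -> is_part f ->
  \sum_(L < n) (-1) ^+ L.+1 * \prod_(k < n) sdist_weight L k (f k)
  = if distinct_parts f then (-1) ^+ `|rank f|%N else 0.
Proof.
move=> n_gt0 part_f; under eq_bigr do rewrite prod_sdist_weight.
case: (distinct_parts f) => /=; last by rewrite big1 // => L _; rewrite mulr0.
have [L _ lp_L] := largest_partP (largest_part_gt0 n_gt0 part_f).
rewrite (bigD1 L) //= lp_L eqxx big1 ?addr0 => [|L' neq_L'L]; last first.
  by rewrite eqSS val_eqE eq_sym (negbTE neq_L'L) mulr0.
by rewrite -exprD -signr_odd -lp_L -odd_distn signr_odd.
Qed.

Lemma Sdist_sum i : Sdist i
  = \sum_(f : fpart i | is_part f) if distinct_parts f then (-1) ^+ `|rank f|%N else 0.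
Proof.
rewrite /Sdist -!sum1_card -!natz !natr_sum big_mkcond [in X in _ - X]big_mkcond.
rewrite -sumrB [RHS]big_mkcond.
apply: eq_bigr => f _; rewrite !inE -signr_odd.
by case: (is_part f); case: (distinct_parts f); case: odd; rewrite /= ?subr0 ?sub0r.
Qed.

Lemma sdist_weight_gf i L k : (0 < i)%N ->
  \sum_(m < i.+1) (sdist_weight L k m)%:P * 'X^(k.+1 * m)
  = (k != L)%:R - (k <= L)%:R * 'X^(k.+1).
Proof.
case: i => [|i] // _; rewrite !big_ord_recl big1 => [|m _]; last first.
  by rewrite polyC0 mul0r.
by rewrite /= muln0 muln1 expr0 mulr1 addr0 rmorphN !rmorph_nat mulNr.
Qed.

Lemma prod_sdist_weight_gf i (L : 'I_i) :
  \prod_(k < i) ((k != L :> nat)%:R - (k <= L)%:R * 'X^(k.+1))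
  = - 'X^(L.+1) * \prod_(k < L) (1 - 'X^(k.+1)) :> {poly int}.
Proof.
pose g (k : nat) : {poly int} := (k != L)%:R - (k <= L)%:R * 'X^(k.+1).
transitivity (\prod_(k < i | (k < L.+1)%N) g k).
  rewrite [RHS]big_mkcond; apply: eq_bigr => k _; rewrite /g ltnS.
  by case: leqP => // lt_Lk; rewrite (gtn_eqF lt_Lk) mul0r subr0.
rewrite -big_ord_widen // big_ord_recr /= /g eqxx leqnn mulrC sub0r mul1r !mulNr.
congr (- (_ * _)); apply: eq_bigr => k _.
by rewrite ltn_eqF ?ltn_ord // (ltnW (ltn_ord k)) mul1r.
Qed.

Lemma Sdist_coef i N : (0 < i)%N -> (i <= N)%N -> Sdist i = (sdist_series N)`_i.
Proof.
move=> i_gt0 le_iN; rewrite (coef_sdist_series (leqnn i) le_iN) coef_sum Sdist_sum.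
under eq_bigr => f part_f do rewrite -(sum_sdist_weight i_gt0 part_f).
rewrite exchange_big; apply: eq_bigr => L _.
rewrite -mulr_sumr sum_parts_prod.
under eq_bigr do rewrite sdist_weight_gf //.
rewrite prod_sdist_weight_gf /sdist_gf -(rmorph_sign (@polyC int)) -mulrA coefCM.
by rewrite mulNr coefN exprS; ring.
Qed.

Theorem theorem6 (n : nat) (hn : (1 <= n)%N) :
  ((\sum_(f : fpart n | is_part f) tpart f)%N)%:Z
  = \sum_(1 <= i < n.+1) Sdist i * (npart (n - i))%:Z.
Proof.
rewrite sum_tpart_coef coefM.
rewrite -(big_mkord xpredT (fun i => (sdist_series n)`_i * (part_gf n)`_(n - i))).
rewrite big_ltn // coef0_sdist_series mul0r add0r.
apply: eq_big_nat => i /andP [i_gt0 lt_in].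
by rewrite (Sdist_coef i_gt0 lt_in) (npart_coef (leq_subr i n)).
Qed.
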